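(* Let $T$ be an invertible operator in $\mathcal D(\mathcal P_n)$ and let $\Omega$ be a convex circular domain (i.e. an open or closed disk or half-plane) with $Z(T\phi_n)\subset\Omega$. Then $Z(Tf)\subset Z(f)+\Omega$ for all $f\in\mathcal P_n\setminus\{0\}$.
   Context: Let $n\ge 1$ be an integer and $\mathcal P_n$ the complex vector space of polynomials in one complex variable of degree at most $n$; $\phi_k(z)=z^k/k!$. $D$ is differentiation on $\mathcal P_n$, $I$ the identity, and $\mathcal D(\mathcal P_n)$ the linear span of $I,D,\dots,D^n$. For a nonzero $f$, $Z(f)$ is the multiset of roots of $f$ (with multiplicity; empty for nonzero constants). For $A,B\subset\mathbb C$, $A+B=\{u+v:u\in A,v\in B\}$. *)

From mathcomp Require Import all_boot all_order all_algebra.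
From mathcomp Require Import reals.
From mathcomp.real_closed Require Import complex.
Set Implicit Arguments. Unset Strict Implicit. Unset Printing Implicit Defensive.
Import Order.TTheory GRing.Theory Num.Theory.
Local Open Scope ring_scope.

Section Defs.
Variable R : realType.
Local Notation C := (R[i]).

Definition inPn (n : nat) (f : {poly C}) : Prop := (size f <= n.+1)%N.

Definition phi (k : nat) : {poly C} := (k`!%:R)^-1 *: 'X^k.

(* The operator T = \sum_{k=0}^n a_k D^k of D(P_n), given by its coefficients *)
Definition Dop (n : nat) (a : 'I_n.+1 -> C) (f : {poly C}) : {poly C} :=
  \sum_(k < n.+1) a k *: f^`(k).

Definition invertible_on_Pn (n : nat) (T : {poly C} -> {poly C}) : Prop :=
  (forall f, inPn n f -> inPn n (T f)) /\
  (forall f g, inPn n f -> inPn n g -> T f = T g -> f = g) /\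
  (forall g, inPn n g -> exists2 f, inPn n f & T f = g).

Definition convex_circular_domain (Om : C -> Prop) : Prop :=
  (exists (c : C) (r : R), 0 < r /\ forall z, Om z <-> ComplexField.Normc.normc (z - c) < r) \/
  (exists (c : C) (r : R), 0 < r /\ forall z, Om z <-> ComplexField.Normc.normc (z - c) <= r) \/
  (exists (a : C) (b : R), a != 0 /\ forall z, Om z <-> b < complex.Re (a * z)) \/
  (exists (a : C) (b : R), a != 0 /\ forall z, Om z <-> b <= complex.Re (a * z)).

Definition Zset (f : {poly C}) : C -> Prop := fun z => root f z.

Definition msum (A B : C -> Prop) : C -> Prop :=
  fun w => exists u v, A u /\ B v /\ w = u + v.

End Defs.

From mathcomp Require Import all_boot all_order all_algebra.
From mathcomp Require Import reals.
From mathcomp.real_closed Require Import complex.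
From mathcomp Require Import ring lra.
From Stdlib Require Import Classical.
Set Implicit Arguments. Unset Strict Implicit. Unset Printing Implicit Defensive.
Import Order.TTheory GRing.Theory Num.Theory.
Local Open Scope ring_scope.

(* Write Omega as the set where the real quadratic form A |z|^2 + 2 Re (b z) + g is
   < 0 (or <= 0), with A >= 0; such sets are closed under taking means.  Suppose w
   is not in Z(f) + Omega.  Translating w to 0, every root v of h(z) = f(z + w) has
   -v outside Omega, and we show (T h)(0) <> 0 by induction on deg h.  Splitting
   off a root v gives (T ((X - v) h1))(0) = (T' h1)(0) for an operator T' with
   coefficients (k + 1) a_(k+1) - v a_k, and T' phi_(n-1) is the polar derivative
   of T phi_n with respect to -v, so its roots stay in Omega by Laguerre's theorem.
   The constant coefficient a_1 - v a_0 of T' does not vanish, since otherwise -v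
   would be the centroid of the roots of T phi_n, which lies in Omega. *)

Lemma sumr_const_seq (V : nmodType) (T : Type) (s : seq T) (x : V) :
  \sum_(t <- s) x = x *+ size s.
Proof. by elim: s => [|t s IH]; rewrite ?big_nil ?big_cons ?IH ?mulrS. Qed.

Lemma horner_deriv_prod_XsubC (F : fieldType) (rs : seq F) (x : F) : x \notin rs ->
  (\prod_(z <- rs) ('X - z%:P))^`().[x] =
  (\prod_(z <- rs) ('X - z%:P)).[x] * \sum_(z <- rs) (x - z)^-1.
Proof.
elim: rs => [|y rs IH]; first by rewrite !big_nil derivC horner0 mulr0.
rewrite in_cons negb_or => /andP[xy xrs].
have xy0 : x - y != 0 by rewrite subr_eq0.
rewrite !big_cons derivM derivXsubC mul1r !hornerE IH //.
by field.
Qed.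

Lemma closed_poly_roots (F : closedFieldType) (p : {poly F}) : p != 0 ->
  exists rs, [/\ p = lead_coef p *: \prod_(z <- rs) ('X - z%:P),
                 size rs = (size p).-1 & forall z, root p z = (z \in rs)].
Proof.
move=> p0; have [rs Dp] := closed_field_poly_normal p.
have lc0 : lead_coef p != 0 by rewrite lead_coef_eq0.
exists rs; split=> // [|z]; first by rewrite Dp size_scale // size_prod_XsubC.
by rewrite Dp rootZ // root_prod_XsubC.
Qed.

Section Centroids.
Variable F : numClosedFieldType.
Implicit Types (p : {poly F}) (s : seq F).

Definition mean s : F := (\sum_(t <- s) t) / (size s)%:R.

Lemma mean_roots p : (1 < size p)%N ->
  exists rs, [/\ rs != [::], {in rs, forall z, root p z}
               & mean rs = - (p`_(size p).-2 / ((size p).-1%:R * lead_coef p))].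
Proof.
move=> sp; have p0 : p != 0 by rewrite -size_poly_gt0 ltnW.
have [rs [Dp size_rs roots_p]] := closed_poly_roots p0.
have lc0 : lead_coef p != 0 by rewrite lead_coef_eq0.
have rs0 : size rs != 0%N by rewrite size_rs -lt0n -ltnS prednK // ltnW.
have n0 : (size rs)%:R != 0 :> F by rewrite pnatr_eq0.
exists rs; split.
- by rewrite -size_eq0.
- by move=> z; rewrite roots_p.
rewrite {1}Dp coefZ -size_rs coefPn_prod_XsubC // /mean.
by field; rewrite lc0 n0.
Qed.

(* Evaluate the polar derivative at x using p'(x) / p(x) = \sum_z (x - z)^-1. *)
Lemma mean_inv_polar_root p zeta x : (1 < size p)%N -> ~~ root p x ->
  root ((size p).-1%:R *: p - ('X - zeta%:P) * p^`()) x ->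
  exists rs, [/\ x != zeta, rs != [::], {in rs, forall z, root p z}
               & mean [seq (x - z)^-1 | z <- rs] = (x - zeta)^-1].
Proof.
move=> sp px hx; have p0 : p != 0 by rewrite -size_poly_gt0 ltnW.
have [rs [Dp size_rs roots_p]] := closed_poly_roots p0.
have lc0 : lead_coef p != 0 by rewrite lead_coef_eq0.
set P := \prod_(_ <- _) _ in Dp; set S := \sum_(z <- rs) (x - z)^-1.
have xrs : x \notin rs by rewrite -roots_p.
have Px : P.[x] != 0 by rewrite -[_ != 0]/(~~ root P x) root_prod_XsubC.
have nS : (size rs)%:R = (x - zeta) * S.
  move: hx; rewrite -size_rs Dp derivZ /root hornerD hornerN hornerM !hornerZ.
  rewrite hornerXsubC horner_deriv_prod_XsubC // -/P -/S.
  move=> /eqP hx; apply: (mulIf (mulf_neq0 lc0 Px)); apply/eqP.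
  by rewrite -subr_eq0 -[X in _ == X]hx; apply/eqP; ring.
have rs0 : size rs != 0%N by rewrite size_rs -lt0n -ltnS prednK // ltnW.
have n0 : (size rs)%:R != 0 :> F by rewrite pnatr_eq0.
have xzeta0 : x - zeta != 0 by apply: contraNneq n0; rewrite nS => ->; rewrite mul0r.
have S0 : S != 0 by apply: contraNneq n0; rewrite nS => ->; rewrite mulr0.
exists rs; split; first by rewrite -subr_eq0.
- by rewrite -size_eq0.
- by move=> z; rewrite roots_p.
by rewrite /mean big_map size_map -/S nS; field; rewrite S0 xzeta0.
Qed.

End Centroids.

Section QuadraticDomains.
Variable R : rcfType.
Local Notation C := R[i].

(* A |z|^2 + 2 Re (b z) + g.  Open and closed disks (A > 0) and half-planes
   (A = 0) are the sets where it is < 0 or <= 0 (in_cdom_disk, in_cdom_halfplane). *)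
Definition cform (A b g z : C) : C := A * (z * z^*) + (b * z + (b * z)^*) + g.

Definition in_cdom (strict : bool) (A b g z : C) : bool :=
  if strict then cform A b g z < 0 else cform A b g z <= 0.

Lemma addcJ_real (z : C) : z + z^* \is Num.real.
Proof. by rewrite addcJ rpredM ?rpred_nat //; apply/complex_realP; eexists. Qed.

Lemma cform_real A b g z :
  A \is Num.real -> g \is Num.real -> cform A b g z \is Num.real.
Proof.
move=> hA hg; rewrite /cform realD // realD ?addcJ_real //.
by rewrite realM // ger0_real // mul_conjC_ge0.
Qed.

Lemma cform_expand A b g x t : A^* = A ->
  cform A b g t = cform A b g x
    + ((A * x^* + b) * (t - x) + ((A * x^* + b) * (t - x))^*)
    + A * ((t - x) * (t - x)^*).
Proof.
by move=> hA; rewrite /cform !(rmorphD, rmorphB, rmorphM) /= hA conjCK; ring.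
Qed.

(* Summing cform_expand at the mean, the linear terms cancel. *)
Lemma cform_mean_le A b g (s : seq C) : 0 <= A -> s != [::] ->
  (size s)%:R * cform A b g (mean s) <= \sum_(t <- s) cform A b g t.
Proof.
move=> hA s0; set mu := mean s; set c := A * mu^* + b.
have n0 : (size s)%:R != 0 :> C by rewrite pnatr_eq0 size_eq0.
have hAJ : A^* = A by rewrite conj_Creal ?ger0_real.
have lin0 : \sum_(t <- s) (c * (t - mu) + (c * (t - mu))^*) = 0.
  rewrite big_split /= -rmorph_sum -mulr_sumr sumrB sumr_const_seq.
  by rewrite -[mu *+ _]mulr_natr /mu /mean divfK // subrr mulr0 rmorph0 addr0.
rewrite (eq_bigr _ (fun t _ => cform_expand b g mu t hAJ)).
rewrite 2!big_split /= lin0 addr0 sumr_const_seq mulr_natl lerDl -mulr_sumr.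
by rewrite mulr_ge0 // sumr_ge0 // => t _; apply: mul_conjC_ge0.
Qed.

Lemma in_cdom_mean st A b g (s : seq C) : 0 <= A -> s != [::] ->
  {in s, forall t, in_cdom st A b g t} -> in_cdom st A b g (mean s).
Proof.
move=> hA s0 hs; have npos : 0 < (size s)%:R :> C by rewrite ltr0n lt0n size_eq0.
have J := cform_mean_le b g hA s0; rewrite /in_cdom; case: st hs => hs.
- rewrite -(pmulr_rlt0 _ npos); apply: le_lt_trans J _.
  case: s s0 hs {npos} => // t s _ hs; rewrite big_cons -[X in _ < X](addr0 0).
  apply: ltr_leD; first exact: hs (mem_head _ _).
  by rewrite big_seq sumr_le0 // => u us; apply/ltW/hs; rewrite in_cons us orbT.
- rewrite -(pmulr_rle0 _ npos); apply: le_trans J _.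
  by rewrite big_seq sumr_le0.
Qed.

Lemma cform_inv A b g x t : A^* = A -> t != 0 ->
  cform A b g (x - t^-1) * (t * t^*) = cform (cform A b g x) (- (A * x) - b^*) A t.
Proof.
move=> hA t0; have tJ0 : t^* != 0 by rewrite conjC_eq0.
rewrite /cform !(rmorphD, rmorphB, rmorphM, rmorphN, fmorphV) /= hA conjCK.
by field; rewrite tJ0 t0.
Qed.

Lemma in_cdom_inv st A b g x t : A^* = A -> t != 0 ->
  in_cdom st (cform A b g x) (- (A * x) - b^*) A t = in_cdom st A b g (x - t^-1).
Proof.
move=> hA t0; have tt : 0 < t * t^*.
  by rewrite lt_def mul_conjC_ge0 mulf_neq0 ?conjC_eq0.
by rewrite /in_cdom -cform_inv //; case: st; rewrite ?pmulr_llt0 ?pmulr_lle0.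
Qed.

Lemma cform_ge0 st A b g x : A \is Num.real -> g \is Num.real ->
  ~~ in_cdom st A b g x -> 0 <= cform A b g x.
Proof.
move=> hA hg; have Cr := cform_real b x hA hg; rewrite /in_cdom.
by case: st => [|/negPf]; rewrite real_leNgt ?real0 // => /negbFE /ltW.
Qed.

(* If x were a root of the polar derivative outside the
   domain, (x - zeta)^-1 would be the mean of the (x - z)^-1 (mean_inv_polar_root).
   The inversion t |-> x - t^-1 carries these points into a domain of the same
   kind whose quadratic coefficient cform A b g x is >= 0 (cform_inv), which is
   closed under means; hence zeta would lie in the original domain. *)
Lemma in_cdom_polar_root st A b g (p : {poly C}) (zeta x : C) :
  0 <= A -> g \is Num.real -> (1 < size p)%N ->
  (forall z, root p z -> in_cdom st A b g z) -> ~~ in_cdom st A b g zeta ->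
  root ((size p).-1%:R *: p - ('X - zeta%:P) * p^`()) x -> in_cdom st A b g x.
Proof.
move=> hA hg sp hp hzeta hx; apply/negPn/negP => nx.
have px : ~~ root p x by apply: contra nx => /hp.
have [rs [x_zeta rs0 rs_p mean_rs]] := mean_inv_polar_root sp px hx.
have hAJ : A^* = A by rewrite conj_Creal ?ger0_real.
have : in_cdom st (cform A b g x) (- (A * x) - b^*) A
                (mean [seq (x - z)^-1 | z <- rs]).
  apply: in_cdom_mean.
  - exact: cform_ge0 (ger0_real hA) hg nx.
  - by rewrite -size_eq0 size_map size_eq0.
  move=> t /mapP[z /rs_p pz ->]; have xz0 : x - z != 0.
    by rewrite subr_eq0; apply: contraNneq px => ->.
  by rewrite in_cdom_inv ?invr_eq0 // invrK subKr hp.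
by rewrite mean_rs in_cdom_inv ?invr_eq0 ?subr_eq0 // invrK subKr (negbTE hzeta).
Qed.

Lemma in_cdom_root_mean st A b g (p : {poly C}) : 0 <= A -> (1 < size p)%N ->
  (forall z, root p z -> in_cdom st A b g z) ->
  in_cdom st A b g (- (p`_(size p).-2 / ((size p).-1%:R * lead_coef p))).
Proof.
move=> hA sp hp; have [rs [rs0 rs_p <-]] := mean_roots sp.
by apply: in_cdom_mean => // z /rs_p /hp.
Qed.

Lemma ltc0R (k : R) : ((k%:C)%C < 0 :> C) = (k < 0).
Proof. by rewrite ltcE /= eqxx. Qed.

Lemma lec0R (k : R) : ((k%:C)%C <= 0 :> C) = (k <= 0).
Proof. by rewrite lecE /= eqxx. Qed.

Lemma real_complex_real (k : R) : (k%:C)%C \is Num.real.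
Proof. by apply/complex_realP; exists k. Qed.

Lemma mul_conjC_normc (y : C) : y * y^* = ((ComplexField.Normc.normc y ^+ 2)%:C)%C.
Proof.
case: y => u v; rewrite /ComplexField.Normc.normc sqr_sqrtr ?addr_ge0 ?sqr_ge0 //.
by apply/eqP; rewrite eq_complex /=; apply/andP; split; apply/eqP; ring.
Qed.

Lemma in_cdom_disk st (c : C) (r : R) z : 0 <= r ->
  in_cdom st 1 (- c^*) (c * c^* - ((r ^+ 2)%:C)%C) z =
  (if st then ComplexField.Normc.normc (z - c) < r
   else ComplexField.Normc.normc (z - c) <= r).
Proof.
move=> r0; set d := ComplexField.Normc.normc (z - c).
have d0 : 0 <= d by rewrite /d; case: (z - c) => u v; apply: sqrtr_ge0.
rewrite /in_cdom; have -> : cform 1 (- c^*) (c * c^* - ((r ^+ 2)%:C)%C) z =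
                             ((d ^+ 2 - r ^+ 2)%:C)%C.
  rewrite rmorphB /= -mul_conjC_normc /cform !(rmorphM, rmorphN, rmorphB) /= conjCK.
  by ring.
by case: st; rewrite ?ltc0R ?lec0R; apply/idP/idP => h; nra.
Qed.

Lemma in_cdom_halfplane st (a : C) (b : R) z :
  in_cdom st 0 (- (a / 2%:R)) ((b%:C)%C) z =
  (if st then b < complex.Re (a * z) else b <= complex.Re (a * z)).
Proof.
rewrite /in_cdom; have -> : cform 0 (- (a / 2%:R)) ((b%:C)%C) z =
                             ((b - complex.Re (a * z))%:C)%C.
  rewrite rmorphB /= ReJ_add /cform !(rmorphM, rmorphN, fmorphV, rmorph_nat) /=.
  by ring.
by case: st; rewrite ?ltc0R ?lec0R (subr_lt0, subr_le0).
Qed.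

End QuadraticDomains.

Section DifferentialOperators.
Variable R : comNzRingType.
Implicit Types (a : nat -> R) (p h : {poly R}).

Definition diffop (N : nat) a p : {poly R} := \sum_(k < N) a k *: p^`(k).

(* Coefficients of the operator T' with (T (('X - v) h)).[0] = (T' h).[0]. *)
Definition polar_coef (v : R) a (k : nat) : R := a k.+1 *+ k.+1 - v * a k.

Lemma size_derivn_le p k : (size p^`(k) <= size p)%N.
Proof.
elim: k => [|k IH]; first by rewrite derivn0.
rewrite derivnS; apply: leq_trans IH.
have [->|nz] := eqVneq p^`(k) 0; first by rewrite deriv0 size_poly0.
exact/ltnW/lt_size_deriv.
Qed.

Lemma size_diffop N a p : (size (diffop N a p) <= size p)%N.
Proof.
rewrite /diffop; elim/big_rec: _ => [|k q _ hq]; first by rewrite size_poly0.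
rewrite (leq_trans (size_polyD _ _)) // geq_max hq andbT.
exact: leq_trans (size_scale_leq _ _) (size_derivn_le _ _).
Qed.

Lemma diffop_widen N M a p : (size p <= N)%N -> (N <= M)%N ->
  diffop M a p = diffop N a p.
Proof.
move=> hp hNM; rewrite /diffop (big_ord_widen M (fun k => a k *: p^`(k)) hNM).
rewrite [RHS]big_mkcond /=; apply: eq_bigr => k _; case: ifP => // /negbT.
by rewrite -leqNgt => hk; rewrite derivn_poly0 ?scaler0 // (leq_trans hp hk).
Qed.

Lemma diffopC N a c : (0 < N)%N -> diffop N a c%:P = (a 0%N * c)%:P.
Proof.
case: N => [//|N] _; rewrite /diffop big_ord_recl derivn0 big1 ?addr0.
  by rewrite -mul_polyC polyCM.
by move=> k _; rewrite derivnC scaler0.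
Qed.

Lemma diffopZ N a c p : diffop N a (c *: p) = c *: diffop N a p.
Proof.
rewrite /diffop scaler_sumr; apply: eq_bigr => k _.
by rewrite derivnZ !scalerA mulrC.
Qed.

Lemma deriv_diffop N a p : (diffop N a p)^`() = diffop N a p^`().
Proof.
rewrite /diffop; elim/big_rec2: _ => [|k q r _ <-]; first by rewrite deriv0.
by rewrite derivD derivZ -derivnS derivSn.
Qed.

Lemma diffop_polar_coef N a v p :
  diffop N (polar_coef v a) p =
  diffop N (fun k => a k.+1 *+ k.+1) p - v *: diffop N a p.
Proof.
rewrite /diffop scaler_sumr -sumrB; apply: eq_bigr => k _.
by rewrite scalerBl scalerA.
Qed.

Lemma derivnS_mulXsubC v h k :
  (('X - v%:P) * h)^`(k.+1) = ('X - v%:P) * h^`(k.+1) + h^`(k) *+ k.+1.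
Proof.
elim: k => [|k IH]; first by rewrite derivn1 derivM derivXsubC mul1r addrC derivn0.
rewrite derivnS IH derivD derivM derivXsubC mul1r derivMn -!derivnS.
by rewrite [_ *+ k.+2]mulrS addrA [h^`(k.+1) + _]addrC.
Qed.

Lemma diffop_mulXsubC N a v h : (size h < N)%N ->
  diffop N a (('X - v%:P) * h) =
  ('X - v%:P) * diffop N a h + diffop N (fun k => a k.+1 *+ k.+1) h.
Proof.
case: N => [//|N] hN; rewrite [X in _ = _ + X](diffop_widen _ hN (leqnSn N)).
rewrite /diffop big_ord_recl derivn0 big_ord_recl derivn0 mulrDr scalerAr -addrA.
congr (_ + _); rewrite mulr_sumr -big_split; apply: eq_bigr => k _.
rewrite derivnS_mulXsubC scalerDr scalerAr -scalerMnr -scalerMnl.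
by congr (_ + _).
Qed.

Lemma horner0_diffop_mulXsubC N a v h : (size h < N)%N ->
  (diffop N a (('X - v%:P) * h)).[0] = (diffop N (polar_coef v a) h).[0].
Proof.
move=> hN; rewrite diffop_mulXsubC // diffop_polar_coef.
by rewrite !(hornerD, hornerN, hornerM, hornerZ) hornerX hornerC sub0r mulNr addrC.
Qed.

Lemma horner_diffop_shift N a p w :
  (diffop N a (p \Po ('X + w%:P))).[0] = (diffop N a p).[w].
Proof.
have derivn_shift k : (p \Po ('X + w%:P))^`(k) = p^`(k) \Po ('X + w%:P).
  elim: k => [|k IH]; first by rewrite !derivn0.
  by rewrite !derivnS IH deriv_comp derivD derivX derivC addr0 mulr1.
rewrite /diffop !horner_sum; apply: eq_bigr => k _.
by rewrite !hornerZ derivn_shift horner_comp !hornerE.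
Qed.

End DifferentialOperators.

Section Phi.
Variable R : realType.
Local Notation C := R[i].
Implicit Type a : nat -> C.

Lemma natr_fact_neq0 k : (k`!%:R : C) != 0.
Proof. by rewrite pnatr_eq0 -lt0n fact_gt0. Qed.

Lemma natr_succ_neq0 k : (k.+1%:R : C) != 0.
Proof. by rewrite pnatr_eq0. Qed.

Lemma deriv_phi k : (phi R k.+1)^`() = phi R k.
Proof.
rewrite /phi derivZ derivXn /= -scalerMnr scalerMnl; congr (_ *: _).
rewrite factS natrM -mulr_natl.
by field; rewrite natr_fact_neq0 addrC natr1 natr_succ_neq0.
Qed.

Lemma mulX_phi k : 'X * phi R k = k.+1%:R *: phi R k.+1.
Proof.
rewrite /phi -scalerAr -exprS scalerA; congr (_ *: _).
rewrite factS natrM.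
by field; rewrite natr_fact_neq0 addrC natr1 natr_succ_neq0.
Qed.

Lemma derivn_phi m k : (phi R m)^`(k) = if (k <= m)%N then phi R (m - k) else 0.
Proof.
elim: k => [|k IH]; first by rewrite derivn0 subn0.
rewrite derivnS IH; case: (ltngtP k m) => hk.
- by rewrite -(subnSK hk) deriv_phi.
- by rewrite deriv0.
- by rewrite hk subnn /phi expr0 derivZ derivC scaler0.
Qed.

Lemma coef_phi m i : (phi R m)`_i = if i == m then (m`!%:R)^-1 else 0.
Proof. by rewrite /phi coefZ coefXn; case: eqP; rewrite ?mulr1 ?mulr0. Qed.

Lemma size_phi m : size (phi R m) = m.+1.
Proof. by rewrite /phi size_scale ?size_polyXn // invr_eq0 natr_fact_neq0. Qed.

Lemma coef_diffop_phi N a m i : (m < N)%N -> (i <= m)%N ->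
  (diffop N a (phi R m))`_i = a (m - i)%N / i`!%:R.
Proof.
move=> hmN him; have hmi : (m - i < N)%N by rewrite (leq_ltn_trans (leq_subr _ _)).
rewrite /diffop coef_sum (bigD1 (Ordinal hmi)) //= big1 ?addr0.
  by rewrite coefZ derivn_phi leq_subr subKn // coef_phi eqxx.
move=> k hk; rewrite coefZ derivn_phi; case: ifP => hkm; last by rewrite coef0 mulr0.
rewrite coef_phi; case: eqP => [hi|]; last by rewrite mulr0.
by case/eqP: hk; apply: val_inj; rewrite /= hi subKn.
Qed.

Lemma size_diffop_phi N a m : (m < N)%N -> a 0%N != 0 ->
  size (diffop N a (phi R m)) = m.+1.
Proof.
move=> hmN a0; apply/eqP; rewrite eqn_leq -{1}(size_phi m) size_diffop /=.
rewrite ltnNge; apply/negP => /leq_sizeP /(_ m (leqnn m)) /eqP.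
have /negbTE fact_m := natr_fact_neq0 m.
by rewrite coef_diffop_phi // subnn mulf_eq0 invr_eq0 (negbTE a0) fact_m.
Qed.

Lemma diffop_phi_polar N a v n : (n.+2 <= N)%N ->
  diffop N (polar_coef v a) (phi R n) =
  n.+1%:R *: diffop N a (phi R n.+1)
    - ('X - (- v)%:P) * (diffop N a (phi R n.+1))^`().
Proof.
move=> hN; rewrite diffop_polar_coef deriv_diffop deriv_phi.
have := @diffop_mulXsubC _ N a 0 (phi R n); rewrite size_phi => /(_ hN).
rewrite polyC0 subr0 mulX_phi diffopZ => ->.
by rewrite polyCN opprK mulrDl mul_polyC opprD addrA [_ * _ + _]addrC addrK.
Qed.

End Phi.

Section InvariantDomain.
Variables (R : realType) (st : bool) (A b g : R[i]).
Implicit Types (a : nat -> R[i]) (h : {poly R[i]}).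
Hypotheses (A_ge0 : 0 <= A) (g_real : g \is Num.real).
Local Notation Om := (in_cdom st A b g).

Lemma polar_coef0_neq0 n a v : a 0%N != 0 ->
  (forall z, root (diffop n.+2 a (phi R n.+1)) z -> Om z) -> ~~ Om (- v) ->
  polar_coef v a 0 != 0.
Proof.
move=> a0 hQ; apply: contra => /eqP pa0.
have a1 : a 1%N = v * a 0%N by apply/eqP; rewrite -subr_eq0 [_ - _]pa0.
have := in_cdom_root_mean A_ge0 _ hQ.
rewrite lead_coefE !size_diffop_phi //= !coef_diffop_phi // subSnn subnn a1.
have -> : - (v * a 0%N / n`!%:R / (n.+1%:R * (a 0%N / n.+1`!%:R))) = - v.
  rewrite factS natrM; field.
  by rewrite a0 natr_fact_neq0 addrC natr1 natr_succ_neq0.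
by apply.
Qed.

Lemma polar_root_in_cdom n a v : a 0%N != 0 ->
  (forall z, root (diffop n.+2 a (phi R n.+1)) z -> Om z) -> ~~ Om (- v) ->
  forall z, root (diffop n.+1 (polar_coef v a) (phi R n)) z -> Om z.
Proof.
move=> a0 hQ hv z.
rewrite -(diffop_widen _ (eq_leq (size_phi R n)) (leqnSn n.+1)) diffop_phi_polar //.
have := in_cdom_polar_root (x := z) A_ge0 g_real _ hQ hv.
by rewrite size_diffop_phi //; apply.
Qed.

Lemma horner0_diffop_neq0 m : forall n a h, size h = m.+1 -> (m <= n)%N ->
  a 0%N != 0 -> (forall z, root (diffop n.+1 a (phi R n)) z -> Om z) ->
  (forall v, root h v -> ~~ Om (- v)) -> (diffop n.+1 a h).[0] != 0.
Proof.
elim: m => [|m IH] n a h size_h le_mn a0 hQ hh.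
  move/eqP/size_poly1P: size_h => [c c0 ->].
  by rewrite diffopC // hornerC mulf_neq0.
have [v hv] : exists v, root h v by apply/closed_rootP; rewrite size_h.
have [h1 Dh] := factor_theorem _ _ hv.
have h10 : h1 != 0.
  by apply: contra_eq_neq size_h; rewrite Dh => ->; rewrite mul0r size_poly0.
have size_h1 : size h1 = m.+1.
  by move: size_h; rewrite Dh size_mul ?polyXsubC_eq0 // size_XsubC addn2 => -[].
case: n le_mn hQ => [//|n] le_mn hQ.
have hv' : ~~ Om (- v) by apply: hh.
rewrite Dh mulrC horner0_diffop_mulXsubC ?size_h1 //.
rewrite (diffop_widen _ (leq_trans (eq_leq size_h1) le_mn) (leqnSn _)).
apply: IH => //.
- exact: polar_coef0_neq0 hQ hv'.
- exact: polar_root_in_cdom hQ hv'.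
- by move=> u hu; apply: hh; rewrite Dh rootM hu.
Qed.

End InvariantDomain.

Section ConvexCircularDomains.
Variable R : realType.
Local Notation C := R[i].

Lemma convex_circular_domain_cform (Om : C -> Prop) : convex_circular_domain Om ->
  exists st A b g,
    [/\ 0 <= A, g \is Num.real & forall z, Om z <-> in_cdom st A b g z].
Proof.
have disk_real (c : C) (r : R) : c * c^* - ((r ^+ 2)%:C)%C \is Num.real.
  by rewrite realB ?real_complex_real // ger0_real // mul_conjC_ge0.
case=> [[c [r [r0 hOm]]]|[[c [r [r0 hOm]]]|[[a [b [_ hOm]]]|[a [b [_ hOm]]]]]].
- exists true, 1, (- c^*), (c * c^* - ((r ^+ 2)%:C)%C).
  by split=> [||z]; rewrite ?ler01 ?disk_real // hOm in_cdom_disk ?(ltW r0).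
- exists false, 1, (- c^*), (c * c^* - ((r ^+ 2)%:C)%C).
  by split=> [||z]; rewrite ?ler01 ?disk_real // hOm in_cdom_disk ?(ltW r0).
- exists true, 0, (- (a / 2%:R)), ((b%:C)%C).
  by split=> [||z]; rewrite ?real_complex_real // hOm in_cdom_halfplane.
- exists false, 0, (- (a / 2%:R)), ((b%:C)%C).
  by split=> [||z]; rewrite ?real_complex_real // hOm in_cdom_halfplane.
Qed.

End ConvexCircularDomains.

Section OperatorsOnPn.
Variable R : realType.
Local Notation C := R[i].

Definition ord_coef n (a : 'I_n.+1 -> C) (k : nat) : C :=
  if (k < n.+1)%N then a (inord k) else 0.

Lemma Dop_diffop n (a : 'I_n.+1 -> C) f : Dop a f = diffop n.+1 (ord_coef a) f.
Proof. by apply: eq_bigr => k _; rewrite /ord_coef ltn_ord inord_val. Qed.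

Lemma invertible_Dop_coef0 n (a : 'I_n.+1 -> C) :
  invertible_on_Pn n (Dop a) -> ord_coef a 0 != 0.
Proof.
case=> _ [injT _]; apply/eqP => a0.
have : Dop a 1 = Dop a 0.
  by rewrite !Dop_diffop -polyC1 -polyC0 !diffopC // a0 !mul0r.
move/injT; rewrite /inPn size_poly1 size_poly0 => /(_ isT isT)/eqP.
by rewrite oner_eq0.
Qed.

End OperatorsOnPn.

Theorem mainTheorem8 (R : realType) (n : nat) (a : 'I_n.+1 -> R[i])
    (Om : R[i] -> Prop) :
  (1 <= n)%N ->
  invertible_on_Pn n (Dop a) ->
  convex_circular_domain Om ->
  (forall z, Zset (Dop a (phi R n)) z -> Om z) ->
  forall f : {poly R[i]}, inPn n f -> f != 0 ->
    forall w, Zset (Dop a f) w -> msum (Zset f) Om w.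
Proof.
move=> _ /invertible_Dop_coef0 a0.
move=> /convex_circular_domain_cform [st [A [b [g [A_ge0 g_real hOm]]]]].
move=> hQ f fPn f0 w hw; apply: NNPP => not_sum.
pose h := f \Po ('X + w%:P).
have size_h : size h = (size f).-1.+1.
  by rewrite size_comp_poly2 ?size_XaddC // prednK // size_poly_gt0.
have h_roots v : root h v -> ~~ in_cdom st A b g (- v).
  rewrite /root horner_comp !hornerE => fv; apply/negP => /hOm Om_v.
  apply: not_sum; exists (v + w), (- v).
  by split=> //; split=> //; rewrite [v + w]addrC addrK.
have le_fn : ((size f).-1 <= n)%N by rewrite -ltnS prednK ?size_poly_gt0.
have Q_roots z : root (diffop n.+1 (ord_coef a) (phi R n)) z -> in_cdom st A b g z.
  by rewrite -Dop_diffop => /hQ /hOm.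
have := horner0_diffop_neq0 A_ge0 g_real size_h le_fn a0 Q_roots h_roots.
by rewrite /h horner_diffop_shift -Dop_diffop (rootP hw) eqxx.
Qed.
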